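(* For any collective choice problem $\mathcal C$ and every $\delta>0$, there exists $\eta_\delta>0$ such that $Q(x,\eta_\delta)\ne\emptyset$ for all $x\in\Upsilon_\delta$.
   Context: Collective choice problem $\mathcal C$: voters $N=\{1,\dots,n\}$ ($n$ odd), agenda setter $A$, compact metrizable policy space $X$, continuous preferences with continuous utilities $u_i$. $y\succ_M x$: a strict majority of voters strictly prefer $y$ to $x$. $\mathcal E$ is the set of Unimprovable policies ($x$ such that no $y$ has $y\succ_A x$ and $y\succ_M x$). For $\delta>0$, $\Upsilon_\delta=\{x\in X:\min_{y\in\mathcal E}u_A(y)\ge u_A(x)+\delta\}$. For $x\in X$, $\eta>0$, $Q(x,\eta)$ is the set of $y\in X$ with $u_A(y)\ge u_A(x)+\eta$ such that some strict majority $S\subseteq N$ has $u_i(y)\ge u_i(x)+\eta$ for all $i\in S$. *)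

From HB Require Import structures.
From mathcomp Require Import all_boot all_order all_algebra.
From mathcomp Require Import all_classical all_reals all_analysis.
Set Implicit Arguments. Unset Strict Implicit. Unset Printing Implicit Defensive.
Import Order.TTheory GRing.Theory Num.Theory numFieldNormedType.Exports.
Local Open Scope classical_set_scope.
Local Open Scope ring_scope.

(* Voters are 'I_n; voter i has utility u i : X -> R; the agenda setter has uA. *)

Definition maj_pref (R : realType) (X : Type) (n : nat) (u : 'I_n -> X -> R)
    (y x : X) : Prop :=
  exists S : {set 'I_n}, (n < 2 * #|S|)%N /\ (forall i, i \in S -> u i x < u i y).

Definition unimprovable (R : realType) (X : Type) (n : nat) (u : 'I_n -> X -> R)
    (uA : X -> R) : set X :=
  [set x | ~ exists y, uA x < uA y /\ maj_pref u y x].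

(* Upsilon_delta = {x | min_{y in E} uA y >= uA x + delta}  (min read as inf,
   i.e. for all y in E). *)
Definition Upsilon (R : realType) (X : Type) (n : nat) (u : 'I_n -> X -> R)
    (uA : X -> R) (delta : R) : set X :=
  [set x | forall y, unimprovable u uA y -> uA x + delta <= uA y].

Definition Qset (R : realType) (X : Type) (n : nat) (u : 'I_n -> X -> R)
    (uA : X -> R) (x : X) (eta : R) : set X :=
  [set y | uA x + eta <= uA y /\
     exists S : {set 'I_n}, (n < 2 * #|S|)%N /\
       (forall i, i \in S -> u i x + eta <= u i y)].

From HB Require Import structures.
From mathcomp Require Import all_boot all_order all_algebra.
From mathcomp Require Import all_classical all_reals all_analysis.
From mathcomp Require Import lra.
Import Order.TTheory GRing.Theory Num.Theory numFieldNormedType.Exports.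
Local Open Scope classical_set_scope.
Local Open Scope ring_scope.

(* A point x of Upsilon_delta lies strictly below every unimprovable policy,
   so it is itself improved upon by some y.  Since the utilities are
   continuous, y improves every point near x by a uniform margin eta.
   Upsilon_delta is closed in the compact space X, hence compact, so finitely
   many such neighbourhoods cover it and the least of their margins works
   everywhere; [compact_near_coveringP], applied to the filter [0^'+] of
   margins, is exactly this finite-subcover argument. *)

Section Improvement.
Context {R : realType} {X : topologicalType} {n : nat}.
Context {u : 'I_n -> X -> R} {uA : X -> R}.

Lemma Upsilon_improvable delta x : 0 < delta -> Upsilon u uA delta x ->
  exists y, uA x < uA y /\ maj_pref u y x.
Proof.
move=> delta_gt0 Ux; apply: contrapT => x_unimp.
by have := Ux x x_unimp; lra.
Qed.

Hypotheses (cu : forall i, continuous (u i)) (cA : continuous uA).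

Lemma closed_Upsilon delta : closed (Upsilon u uA delta).
Proof.
have -> : Upsilon u uA delta =
    \bigcap_(y in unimprovable u uA) uA @^-1` [set r | r <= uA y - delta].
  by apply/seteqP; split=> x /= Ux y /Ux /= ?; lra.
apply: closed_bigI => y _; apply: preimage_closed; last exact: closed_le.
by move=> x _; exact: cA.
Qed.

(* [m] is the least strict gain of y over z, for the agenda setter and for the
   voters of S; near z, y still gains more than [m / 2]. *)
Lemma near_improvement_Qset z y : uA z < uA y -> maj_pref u y z ->
  \forall x \near z & eta \near 0^'+, Qset u uA x eta y.
Proof.
move=> gainA [S [S_maj gainS]].
pose m := \big[Order.min/(uA y - uA z)]_(i in S) (u i y - u i z).
have m_gt0 : 0 < m.
  by apply: lt_bigmin => [|i /gainS]; rewrite subr_gt0.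
have m_leA : m <= uA y - uA z by exact: bigmin_le_id.
have m_leS i : i \in S -> m <= u i y - u i z by move=> iS; exact: bigmin_le_cond.
have m2_gt0 : 0 < m / 2 by rewrite divr_gt0.
clearbody m.
have nearA : \forall x \near z, uA x < uA z + m / 2.
  by apply: (cvgr_lt _ (cA z)); rewrite ltrDl.
have nearS : \forall x \near z, forall i, i \in S -> u i x < u i z + m / 2.
  apply: filter_forall => i; have : u i z < u i z + m / 2 by rewrite ltrDl.
  by move/(cvgr_lt _ (cu i z)); apply: filterS => x + _.
exists ([set x | uA x < uA z + m / 2] `&`
        [set x | forall i, i \in S -> u i x < u i z + m / 2],
        [set eta | eta < m / 2]) => /=.
  by split; [exact: filterI | exact: nbhs_right_lt].
move=> [x eta] /= [[xA xS] eta_small]; split; first lra.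
by exists S; split=> // i iS; have := xS i iS; have := m_leS i iS; lra.
Qed.

End Improvement.

Theorem lemma7 (R : realType) (X : pseudoMetricType R) (n : nat)
    (u : 'I_n -> X -> R) (uA : X -> R)
    (hX : hausdorff_space X) (cX : compact [set: X]) (hn : odd n)
    (cu : forall i, continuous (u i)) (cA : continuous uA) :
  forall delta : R, 0 < delta ->
  exists eta : R, 0 < eta /\
    forall x, Upsilon u uA delta x -> Qset u uA x eta !=set0.
Proof.
move=> delta delta_gt0.
have cU : compact (Upsilon u uA delta).
  by apply: subclosed_compact cX _ => //; exact: closed_Upsilon.
have cover : \forall eta \near 0^'+,
    Upsilon u uA delta `<=` (fun x => Qset u uA x eta !=set0).
  apply: (compact_near_coveringP _).1 cU _ _
    (fun eta x => Qset u uA x eta !=set0) _ _ => x Ux.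
  have [y [gainA gainM]] := Upsilon_improvable delta x delta_gt0 Ux.
  move: (near_improvement_Qset cu cA x y gainA gainM).
  by apply: filterS => -[x' eta] Qy; exists y.
have [eta [eta_gt0 Ueta]] := filter_ex (filterI (nbhs_right_gt 0) cover).
by exists eta; split=> // x /Ueta.
Qed.
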